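(* For any positive integer $k$, we have $N_k(1) \geq 5k-2$ and $N'_k(1) \geq 4k-2$.
   Context: A tournament is an orientation of a complete graph. For a digraph $D$ and $X \subseteq V(D)$, inverting $X$ means reversing the direction of every arc of $D$ with both endvertices in $X$. A digraph $D$ is $k$-arc-strong if for every partition $(V_1,V_2)$ of $V(D)$ into nonempty sets there are at least $k$ arcs from $V_1$ to $V_2$; it is $k$-strong if $|V(D)|\ge k+1$ and $D-S$ is strongly connected for every $S\subseteq V(D)$ with $|S|<k$. $\mathrm{sinv}'_k(D)$ (resp. $\mathrm{sinv}_k(D)$) is the minimum number of sets whose successive inversion transforms $D$ into a $k$-arc-strong (resp. $k$-strong) digraph. For $n \ge 2k+1$, $m_k(n) = \max\{\mathrm{sinv}_k(T) : T \text{ tournament of order } n\}$ and $m'_k(n) = \max\{\mathrm{sinv}'_k(T) : T \text{ tournament of order } n\}$. For positive integers $k,i$, $N_k(i)$ (resp. $N'_k(i)$) is the smallest integer such that $m_k(n) \leq i$ (resp. $m'_k(n)\le i$) for all $n \geq N_k(i)$ (resp. $n\ge N'_k(i)$). *)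

From mathcomp Require Import all_boot.
Set Implicit Arguments. Unset Strict Implicit. Unset Printing Implicit Defensive.

Definition tournament (n : nat) (D : rel 'I_n) : Prop :=
  (forall x, ~~ D x x) /\ (forall x y, x != y -> D x y (+) D y x).

Definition invert (n : nat) (D : rel 'I_n) (X : {set 'I_n}) : rel 'I_n :=
  fun x y => if (x \in X) && (y \in X) then D y x else D x y.

Definition invert_seq (n : nat) (D : rel 'I_n) (Xs : seq {set 'I_n}) : rel 'I_n :=
  foldl (@invert n) D Xs.

Definition arc_strong (k n : nat) (D : rel 'I_n) : Prop :=
  forall V1 : {set 'I_n}, V1 != set0 -> V1 != setT ->
    k <= #|[set p : 'I_n * 'I_n | (p.1 \in V1) && (p.2 \notin V1) && D p.1 p.2]|.

Definition strong_minus (n : nat) (D : rel 'I_n) (S : {set 'I_n}) : Prop :=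
  forall x y, x \notin S -> y \notin S ->
    connect (fun u v => [&& D u v, u \notin S & v \notin S]) x y.

Definition kstrong (k n : nat) (D : rel 'I_n) : Prop :=
  k.+1 <= n /\ forall S : {set 'I_n}, #|S| < k -> strong_minus D S.

Definition sinv_le (k n : nat) (D : rel 'I_n) (i : nat) : Prop :=
  exists Xs : seq {set 'I_n}, size Xs <= i /\ kstrong k (invert_seq D Xs).
Definition sinv'_le (k n : nat) (D : rel 'I_n) (i : nat) : Prop :=
  exists Xs : seq {set 'I_n}, size Xs <= i /\ arc_strong k (invert_seq D Xs).

Definition m_le (k n i : nat) : Prop :=
  forall D : rel 'I_n, tournament D -> sinv_le k D i.
Definition m'_le (k n i : nat) : Prop :=
  forall D : rel 'I_n, tournament D -> sinv'_le k D i.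

(* N is an admissible threshold (within the domain n >= 2k+1 of m_k): N_k(i) is the least such N,
   so "N_k(i) >= b" means every admissible threshold is >= b. *)
Definition N_threshold (k i N : nat) : Prop :=
  (2 * k).+1 <= N /\ forall n, N <= n -> m_le k n i.
Definition N'_threshold (k i N : nat) : Prop :=
  (2 * k).+1 <= N /\ forall n, N <= n -> m'_le k n i.

From mathcomp Require Import all_boot.
From mathcomp Require Import zify.
Set Implicit Arguments. Unset Strict Implicit. Unset Printing Implicit Defensive.

(* Let a = 2k - 1 and let T(k, m) be the tournament on 2a + m vertices made of a
   head H and a tail L, each a rotational tournament on a vertices (in- and
   out-degree k - 1), and a transitive middle M on m vertices, with H => M => L
   and H => L.  A k-strong or k-arc-strong digraph has minimum in- and out-degree
   at least k.  So if inverting a single set X makes T(k, m) k-(arc-)strong, X must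
   contain every head vertex (whose in-arcs would otherwise be untouched) and every
   tail vertex (likewise for out-arcs).  But then every arc between H and the rest
   with its other end in X now points into H: for m = 0 no arc leaves H, and for
   m = k - 1 deleting the fewer than k vertices of M \ X leaves H without out-arcs.
   Hence m_k(5k - 3) > 1 and m'_k(4k - 2) > 1. *)

Lemma card_le_cover n p (f : nat -> nat) (S : {set 'I_n}) :
  (forall u, u \in S -> exists2 d, d < p & u = f d :> nat) -> #|S| <= p.
Proof.
move=> coverS; rewrite cardE -(size_map (@nat_of_ord n)).
rewrite -[p](size_iota 0) -(size_map f (iota 0 p)).
apply: uniq_leq_size; first by rewrite (map_inj_uniq (@ord_inj n)) enum_uniq.
move=> _ /mapP [u + ->]; rewrite mem_enum => /coverS [d dp ->].
by rewrite map_f // mem_iota.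
Qed.

Section Inversion.
Variables (n : nat) (D : rel 'I_n) (X : {set 'I_n}).

Lemma invert_notinl x y : x \notin X -> invert D X x y = D x y.
Proof. by rewrite /invert => /negbTE ->. Qed.

Lemma invert_notinr x y : y \notin X -> invert D X x y = D x y.
Proof. by rewrite /invert => /negbTE ->; rewrite andbF. Qed.

Lemma invert_in x y : x \in X -> y \in X -> invert D X x y = D y x.
Proof. by rewrite /invert => -> ->. Qed.

End Inversion.

Lemma invert_seq_le1 n (Xs : seq {set 'I_n}) :
  size Xs <= 1 -> exists X, forall D : rel 'I_n, invert_seq D Xs =2 invert D X.
Proof.
case: Xs => [|X [|]] // _; last by exists X.
by exists set0 => D x y; rewrite /invert inE.
Qed.

Section Connectivity.
Variables (n k : nat) (D : rel 'I_n).

Lemma kstrong_closed (S A : {set 'I_n}) x y :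
  kstrong k D -> #|S| < k ->
  (forall u v, D u v -> u \notin S -> v \notin S -> u \in A -> v \in A) ->
  x \notin S -> y \notin S -> x \in A -> y \in A.
Proof.
move=> [_ strongD] ltSk closedA xS yS.
have /connectP [p + ->] := strongD S ltSk x y xS yS.
elim: p x {xS yS} => [|z p IHp] x //= /andP [/and3P [Dxz xS zS] pzp] xA.
exact: IHp pzp (closedA x z Dxz xS zS xA).
Qed.

Lemma kstrong_exists_notin h (S : {set 'I_n}) :
  kstrong k D -> #|S| < k -> exists x, x \notin h |: S.
Proof.
move=> [ltkn _] ltSk; suff /subsetPn [x _ xS] : ~~ ([set: 'I_n] \subset h |: S).
  by exists x.
apply: contraTN ltkn => /subset_leq_card; rewrite cardsT card_ord cardsU1 -leqNgt.
by move/leq_trans; apply; apply: leq_trans ltSk; rewrite -add1n leq_add2r leq_b1.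
Qed.

Lemma kstrong_indeg h : kstrong k D -> ~~ D h h -> k <= #|[set u | D u h]|.
Proof.
move=> Dk Dhh; rewrite leqNgt; apply/negP => ltSk.
have [x] := kstrong_exists_notin h Dk ltSk; rewrite !inE => /norP [xh xS].
suff : h \in [set~ h] by rewrite !inE eqxx.
apply: (kstrong_closed (x := x) Dk ltSk); rewrite ?inE //.
by move=> u v Duv; rewrite !inE => uS _ _; apply: contraNneq uS => <-.
Qed.

Lemma kstrong_outdeg h : kstrong k D -> ~~ D h h -> k <= #|[set v | D h v]|.
Proof.
move=> Dk Dhh; rewrite leqNgt; apply/negP => ltSk.
have [y] := kstrong_exists_notin h Dk ltSk; rewrite !inE => /norP [yh yS].
suff : y \in [set h] by rewrite inE (negbTE yh).
apply: (kstrong_closed (x := h) Dk ltSk); rewrite ?inE //.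
by move=> u v Duv _; rewrite !inE => vS /eqP uh; move: vS; rewrite -uh Duv.
Qed.

Lemma arc_strong_indeg h x :
  arc_strong k D -> x != h -> k <= #|[set u | D u h]|.
Proof.
move=> Dk xh.
have V1_gt0 : [set~ h] != set0 by apply/set0Pn; exists x; rewrite !inE.
have V1_ltT : [set~ h] != setT by apply/eqP => /setP /(_ h); rewrite !inE eqxx.
apply: leq_trans (Dk _ V1_gt0 V1_ltT) _.
apply: leq_trans (leq_imset_card (fun u => (u, h)) _); apply: subset_leq_card.
apply/subsetP => -[u v]; rewrite !inE negbK /= => /andP [/andP [_ /eqP ->] Duh].
by apply: imset_f; rewrite inE.
Qed.

Lemma arc_strong_outdeg h x :
  arc_strong k D -> x != h -> k <= #|[set v | D h v]|.
Proof.
move=> Dk xh.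
have V1_gt0 : [set h] != set0 by apply/set0Pn; exists h; rewrite inE.
have V1_ltT : [set h] != setT by apply/eqP => /setP /(_ x); rewrite !inE (negbTE xh).
apply: leq_trans (Dk _ V1_gt0 V1_ltT) _.
apply: leq_trans (leq_imset_card (fun v => (h, v)) _); apply: subset_leq_card.
apply/subsetP => -[u v]; rewrite !inE /= => /andP [/andP [/eqP -> _] Dhv].
by apply: imset_f; rewrite inE.
Qed.

End Connectivity.

(* [rot_beats k i j] on [0, 2k-1): [i] beats [j] iff [(j - i) mod (2k-1)] lies in
   [1, k-1], so every vertex has in- and out-degree [k - 1]. *)
Definition rot_beats (k i j : nat) : bool :=
  ((i < j) && (j - i < k)) || ((j < i) && (k <= i - j)).

Definition rot_pred (k j d : nat) : nat :=
  if d < j then j - d.+1 else j + (2 * k - 1) - d.+1.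

Definition rot_succ (k i d : nat) : nat :=
  if i + d.+1 < 2 * k - 1 then i + d.+1 else i + d.+1 - (2 * k - 1).

Section Rotational.
Variable k : nat.
Local Notation a := (2 * k - 1).

Lemma rot_beats_irr i : rot_beats k i i = false.
Proof. by rewrite /rot_beats ltnn. Qed.

Lemma rot_beats_total i j : 0 < k -> i < a -> j < a -> i != j ->
  rot_beats k i j (+) rot_beats k j i.
Proof.
move=> k_gt0 ia ja; rewrite /rot_beats.
by case: ltngtP => //= _ _; rewrite ?andbF ?orbF; case: leqP; case: leqP; lia.
Qed.

Lemma rot_beats_pred i j : i < a -> j < a -> rot_beats k i j ->
  exists2 d, d < k - 1 & i = rot_pred k j d.
Proof.
rewrite /rot_beats /rot_pred => ia ja /orP [] /andP [ij dk].
  by exists (j - i).-1; [lia | case: ifP; lia].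
by exists (j + a - i).-1; [lia | case: ifP; lia].
Qed.

Lemma rot_beats_succ i j : i < a -> j < a -> rot_beats k i j ->
  exists2 d, d < k - 1 & j = rot_succ k i d.
Proof.
rewrite /rot_beats /rot_succ => ia ja /orP [] /andP [ij dk].
  by exists (j - i).-1; [lia | case: ifP; lia].
by exists (j + a - i).-1; [lia | case: ifP; lia].
Qed.

End Rotational.

(* Vertices [0, a) form the head, [a, a + m) the middle and [a + m, 2a + m) the
   tail, where [a = 2k - 1]: head and tail are rotational, the middle is
   transitive, and each block beats every later block. *)
Definition block_beats (k m x y : nat) : bool :=
  let a := 2 * k - 1 in let b := a + m in
  if x < a then (y < a) ==> rot_beats k x y
  else if y < a then false
  else if x < b then (y < b) ==> (x < y)
  else if y < b then false
  else rot_beats k (x - b) (y - b).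

Definition block_order (k m : nat) : nat := 2 * (2 * k - 1) + m.

Definition block_tournament (k m : nat) : rel 'I_(block_order k m) :=
  fun x y => block_beats k m x y.
Arguments block_tournament : clear implicits.

Section BlockTournament.
Variables (k m : nat).
Hypothesis k_gt0 : 0 < k.
Local Notation a := (2 * k - 1).
Local Notation n := (block_order k m).
Local Notation T := (block_tournament k m).

Let nE : n = 2 * a + m. Proof. by []. Qed.

Lemma block_tournamentP : tournament T.
Proof.
rewrite /T /block_tournament /block_beats; split=> [x|x y].
  by do ![case: ifP => /= ->]; rewrite ?rot_beats_irr ?ltnn.
rewrite -(inj_eq val_inj) => /= xy; have xn := ltn_ord x; have yn := ltn_ord y.
by do ![case: ifP => /= ? //]; try apply: rot_beats_total; lia.
Qed.

Lemma block_beats_head u h : h < a -> block_beats k m u h -> u < a.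
Proof. by rewrite /block_beats => ha; do ![case: ifP => //]; lia. Qed.

Lemma block_head_indeg (h : 'I_n) : h < a -> #|[set u | T u h]| < k.
Proof.
move=> ha; apply: (@leq_ltn_trans (k - 1)); last lia.
apply: (card_le_cover (f := rot_pred k h)) => u; rewrite inE => Tuh.
have ua := block_beats_head ha Tuh; move: Tuh.
by rewrite /T /block_tournament /block_beats ua ha /=; apply: rot_beats_pred.
Qed.

Lemma block_tail_outdeg (l : 'I_n) : a + m <= l -> #|[set v | T l v]| < k.
Proof.
move=> la; apply: (@leq_ltn_trans (k - 1)); last lia.
apply: (card_le_cover (f := fun d => a + m + rot_succ k (l - (a + m)) d)) => v.
have ln := ltn_ord l; have vn := ltn_ord v.
rewrite inE /T /block_tournament /block_beats.
do ![case: ifP => //]; try lia; move=> va _ _ _ Rlv.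
have [||d dk vd] := rot_beats_succ _ _ Rlv; [lia | lia | exists d; lia].
Qed.

Variables (X : {set 'I_n}) (R : rel 'I_n).
Hypothesis RE : R =2 invert T X.

Let n_gt0 : 0 < n. Proof. lia. Qed.
Let n_pred_lt : n.-1 < n. Proof. lia. Qed.
Let first_vertex : 'I_n := Ordinal n_gt0.
Let last_vertex : 'I_n := Ordinal n_pred_lt.

Let R_in_nbhs h : h \notin X -> [set u | R u h] = [set u | T u h].
Proof. by move=> hX; apply/setP => u; rewrite !inE RE invert_notinr. Qed.

Let R_out_nbhs h : h \notin X -> [set v | R h v] = [set v | T h v].
Proof. by move=> hX; apply/setP => v; rewrite !inE RE invert_notinl. Qed.

Let R_irr h : ~~ R h h.
Proof. by rewrite RE /invert if_same (proj1 block_tournamentP). Qed.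

Lemma kstrong_invert_head (h : 'I_n) : kstrong k R -> h < a -> h \in X.
Proof.
move=> Rk ha; apply: contraT => hX.
by have := kstrong_indeg Rk (R_irr h); rewrite R_in_nbhs // leqNgt block_head_indeg.
Qed.

Lemma kstrong_invert_tail (l : 'I_n) : kstrong k R -> a + m <= l -> l \in X.
Proof.
move=> Rk la; apply: contraT => lX.
by have := kstrong_outdeg Rk (R_irr l); rewrite R_out_nbhs // leqNgt block_tail_outdeg.
Qed.

Lemma arc_strong_invert_head (h : 'I_n) : arc_strong k R -> h < a -> h \in X.
Proof.
move=> Rk ha; apply: contraT => hX.
have last_h : last_vertex != h by rewrite -val_eqE /=; lia.
by have := arc_strong_indeg Rk last_h; rewrite R_in_nbhs // leqNgt block_head_indeg.
Qed.

Lemma arc_strong_invert_tail (l : 'I_n) : arc_strong k R -> a + m <= l -> l \in X.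
Proof.
move=> Rk la; apply: contraT => lX.
have first_l : first_vertex != l by rewrite -val_eqE /=; lia.
by have := arc_strong_outdeg Rk first_l; rewrite R_out_nbhs // leqNgt block_tail_outdeg.
Qed.

Lemma block_invert_not_kstrong : m < k -> ~ kstrong k R.
Proof.
move=> mk Rk; set S := [set u : 'I_n | (a <= u < a + m) && (u \notin X)].
have ltSk : #|S| < k.
  apply: leq_ltn_trans mk; apply: (card_le_cover (f := addn a)) => u.
  by rewrite inE => /andP [/andP [au uam] _]; exists (u - a); lia.
have closedH u v : R u v -> u \notin S -> v \notin S ->
    u \in [set x : 'I_n | x < a] -> v \in [set x : 'I_n | x < a].
  move=> Ruv _ vS; rewrite !inE => ua; have [//|av] := ltnP v a.
  have vX : v \in X.
    have [/(kstrong_invert_tail Rk) //|vam] := leqP (a + m) v.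
    by move: vS; rewrite inE av vam negbK.
  move: Ruv; rewrite RE (invert_in _ (kstrong_invert_head Rk ua) vX).
  by move=> /(block_beats_head ua); rewrite ltnNge av.
have := kstrong_closed (x := first_vertex) (y := last_vertex) Rk ltSk closedH.
by rewrite !inE /=; lia.
Qed.

Lemma block_invert_not_arc_strong : m = 0 -> ~ arc_strong k R.
Proof.
move=> m0 Rk; set H := [set u : 'I_n | u < a].
have H_gt0 : H != set0 by apply/set0Pn; exists first_vertex; rewrite inE /=; lia.
have H_ltT : H != setT by apply/eqP => /setP /(_ last_vertex); rewrite !inE /=; lia.
suff no_arc_out : [set p : 'I_n * 'I_n | (p.1 \in H) && (p.2 \notin H) && R p.1 p.2] = set0.
  by have := Rk H H_gt0 H_ltT; rewrite no_arc_out cards0; lia.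
apply/setP => -[u v]; rewrite !inE /= -leqNgt; apply/negP => /andP [/andP [ua av] Ruv].
have vX : v \in X by apply: (arc_strong_invert_tail Rk); lia.
move: Ruv; rewrite RE (invert_in _ (arc_strong_invert_head Rk ua) vX).
by move=> /(block_beats_head ua); rewrite ltnNge av.
Qed.

End BlockTournament.

Theorem proposition1p13 (k : nat) (hk : 0 < k) :
  (forall N, N_threshold k 1 N -> 5 * k - 2 <= N) /\
  (forall N, N'_threshold k 1 N -> 4 * k - 2 <= N).
Proof.
split=> N [_ thresholdN]; rewrite leqNgt; apply/negP => ltN.
- have /thresholdN /(_ _ (block_tournamentP (k - 1) hk)) : N <= block_order k (k - 1).
    by rewrite /block_order; lia.
  move=> [Xs [/invert_seq_le1 [X RE] Rk]].
  by apply: (block_invert_not_kstrong hk (RE _) _ Rk); lia.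
- have /thresholdN /(_ _ (block_tournamentP 0 hk)) : N <= block_order k 0.
    by rewrite /block_order; lia.
  move=> [Xs [/invert_seq_le1 [X RE] Rk]].
  exact: (block_invert_not_arc_strong hk (RE _) erefl Rk).
Qed.
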